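(* No ordinal metric on $\omega_1$ is an ultrametric; that is, for every ordinal metric $\rho:\omega_1^2\to\omega$ there are $\alpha,\beta,\gamma\in\omega_1$ with $\rho(\alpha,\beta)>\max(\rho(\alpha,\gamma),\rho(\gamma,\beta))$.
   Context: For a set of ordinals $X$, a function $\rho:X^2\to\omega$ is an ordinal metric if: (a) $\rho(\alpha,\beta)=0$ iff $\alpha=\beta$; (b) $\rho(\alpha,\beta)=\rho(\beta,\alpha)$; (c) for all $\alpha,\beta,\gamma\in X$ with $\alpha<\beta$ and $\alpha<\gamma$, $\rho(\alpha,\beta)\le\max(\rho(\alpha,\gamma),\rho(\beta,\gamma))$; (d) for every $\beta\in X$ and $k\in\omega$ the set $\{\alpha\le\beta:\rho(\alpha,\beta)\le k\}$ is finite. *)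

From Stdlib Require Import List Arith.
Import ListNotations.

(* A model of omega_1: a type T with a strict well-order [lt] that is
   uncountable while every proper initial segment is countable.
   Such a well-order is unique up to isomorphism: it is (the order type of)
   the first uncountable ordinal omega_1. *)
Record is_omega1 (T : Type) (lt : T -> T -> Prop) : Prop := {
  om1_irrefl : forall x, ~ lt x x;
  om1_trans : forall x y z, lt x y -> lt y z -> lt x z;
  om1_total : forall x y, lt x y \/ x = y \/ lt y x;
  om1_wf : well_founded lt;
  om1_uncountable : ~ exists f : T -> nat, forall x y, f x = f y -> x = y;
  om1_segments_countable : forall b : T, exists f : T -> nat,
      forall x y, lt x b -> lt y b -> f x = f y -> x = y
}.

Definition ordinal_metric (T : Type) (lt : T -> T -> Prop)
  (rho : T -> T -> nat) : Prop :=
  (forall a b, rho a b = 0 <-> a = b) /\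
  (forall a b, rho a b = rho b a) /\
  (forall a b c, lt a b -> lt a c -> rho a b <= Nat.max (rho a c) (rho b c)) /\
  (forall (b : T) (k : nat), exists l : list T,
      forall a, (lt a b \/ a = b) -> rho a b <= k -> In a l).

From Stdlib Require Import List Lia Classical ClassicalEpsilon Cantor.

(* If rho were an ultrametric, fix a point b0.  Whenever rho c b0 <= rho a b0 we get
   rho c a <= rho a b0, so by condition (d) the set of c <= a with
   rho c b0 <= rho a b0 is finite; its size strictly increases along the order
   among points of the same level rho a b0.  Hence a |-> (rho a b0, that size)
   injects the uncountable T into nat * nat. *)

Lemma finite_enumeration (A : Type) (P : A -> Prop) (L : list A) :
  (forall x, P x -> In x L) -> exists l, NoDup l /\ forall x, In x l <-> P x.
Proof.
  intros HL.
  pose (decP := fun x => if excluded_middle_informative (P x) then true else false).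
  pose (dec_eq := fun x y : A => excluded_middle_informative (x = y)).
  exists (nodup dec_eq (filter decP L)); split; [apply NoDup_nodup |].
  intros x; rewrite nodup_In, filter_In; unfold decP.
  destruct (excluded_middle_informative (P x)); split; intuition; discriminate.
Qed.

Section UltrametricCountable.

Variables (T : Type) (lt : T -> T -> Prop) (rho : T -> T -> nat).
Hypothesis lt_irrefl : forall x, ~ lt x x.
Hypothesis lt_trans : forall x y z, lt x y -> lt y z -> lt x z.
Hypothesis lt_total : forall x y, lt x y \/ x = y \/ lt y x.
Hypothesis rho_sym : forall a b, rho a b = rho b a.
Hypothesis rho_ultra : forall a b c, rho a b <= Nat.max (rho a c) (rho c b).
Hypothesis rho_balls_finite : forall (b : T) (k : nat), exists l : list T,
  forall a, (lt a b \/ a = b) -> rho a b <= k -> In a l.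

Section Level.

Variable b0 : T.

Definition below_level (a c : T) : Prop :=
  rho c b0 <= rho a b0 /\ (lt c a \/ c = a).

Lemma below_level_enumeration (a : T) :
  exists l, NoDup l /\ forall c, In c l <-> below_level a c.
Proof.
  destruct (rho_balls_finite a (rho a b0)) as [L HL].
  apply (finite_enumeration _ _ L); intros c [Hc Hca]; apply HL; [exact Hca |].
  pose proof (rho_ultra c a b0) as Hultra; rewrite (rho_sym b0 a) in Hultra; lia.
Qed.

Definition level_rank (a : T) : nat :=
  length (proj1_sig (constructive_indefinite_description _ (below_level_enumeration a))).

Lemma level_rank_lt (a b : T) :
  lt a b -> rho a b0 = rho b b0 -> level_rank a < level_rank b.
Proof.
  intros Hab Hlevel; unfold level_rank.
  destruct (constructive_indefinite_description _ (below_level_enumeration a))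
    as [la [Na Ia]]; destruct (constructive_indefinite_description _ (below_level_enumeration b))
    as [lb [Nb Ib]]; simpl.
  assert (b_notin_la : ~ In b la).
  { intros [_ [Hba | ->]]%Ia; [exact (lt_irrefl _ (lt_trans _ _ _ Hab Hba)) |].
    exact (lt_irrefl _ Hab). }
  enough (length (b :: la) <= length lb) by (simpl in *; lia).
  apply NoDup_incl_length; [constructor; assumption |].
  intros c [<- | [Hc Hca]%Ia]; apply Ib; split; try lia.
  - now right.
  - destruct Hca as [Hca | ->]; left; [exact (lt_trans _ _ _ Hca Hab) | exact Hab].
Qed.

Lemma level_rank_injective (x y : T) :
  rho x b0 = rho y b0 -> level_rank x = level_rank y -> x = y.
Proof.
  intros Hlevel Hrank.
  destruct (lt_total x y) as [H | [H | H]]; [| exact H |].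
  - pose proof (level_rank_lt _ _ H Hlevel); lia.
  - pose proof (level_rank_lt _ _ H (eq_sym Hlevel)); lia.
Qed.

End Level.

Lemma ultrametric_order_countable :
  exists f : T -> nat, forall x y, f x = f y -> x = y.
Proof.
  destruct (classic (inhabited T)) as [[b0] | empty].
  - exists (fun a => to_nat (rho a b0, level_rank b0 a)).
    intros x y Hxy%(f_equal of_nat); rewrite !cancel_of_to in Hxy.
    injection Hxy as Hlevel Hrank.
    exact (level_rank_injective b0 _ _ Hlevel Hrank).
  - exists (fun _ => 0); intros x; exfalso; exact (empty (inhabits x)).
Qed.

End UltrametricCountable.

Theorem mainTheorem20 :
  forall (T : Type) (lt : T -> T -> Prop) (rho : T -> T -> nat),
    is_omega1 T lt -> ordinal_metric T lt rho ->
    exists a b c : T, rho a b > Nat.max (rho a c) (rho c b).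
Proof.
  intros T lt rho Hom [_ [Hsym [_ Hfin]]].
  apply NNPP; intro no_witness.
  assert (rho_ultra : forall a b c, rho a b <= Nat.max (rho a c) (rho c b)).
  { intros a b c; apply NNPP; intro Hlt; apply no_witness; exists a, b, c; lia. }
  apply (om1_uncountable _ _ Hom).
  exact (ultrametric_order_countable _ _ _ (om1_irrefl _ _ Hom) (om1_trans _ _ Hom)
           (om1_total _ _ Hom) Hsym rho_ultra Hfin).
Qed.
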